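(* Let $q\neq-1$ be real and $n\ge0$. Then $$T_{2n+1}(x,s,q)=\sum_{k=0}^{n}\begin{bmatrix} 2n+1\\ 2k\end{bmatrix}(-1)^{n-k}\,t_{2n-2k+1}(q)\,x^{2n+1-2k}\,T_{2k}(x,s,q).$$
   Context: $T_0=1$, $T_1=x$, $T_n(x,s,q)=(1+q^{n-1})x\,T_{n-1}(x,s,q)+q^{n-1}s\,T_{n-2}(x,s,q)$ for $n\ge2$. Notation: $[m]=1+q+\cdots+q^{m-1}$, $[m]!=[1]\cdots[m]$, $\begin{bmatrix} m\\ j\end{bmatrix}=\frac{[m]!}{[j]![m-j]!}$. The $q$-exponential is the formal power series $e(z)=\sum_{m\ge0}z^m/[m]!$, and the $q$-tangent numbers $t_{2m+1}(q)$ are defined by the formal power series identity $\frac{e(z)-e(-z)}{e(z)+e(-z)}=\sum_{m\ge0}\frac{(-1)^m t_{2m+1}(q)}{[2m+1]!}z^{2m+1}$. *)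

From HB Require Import structures.
From mathcomp Require Import all_boot all_order all_algebra.
Set Implicit Arguments. Unset Strict Implicit. Unset Printing Implicit Defensive.
Import Order.TTheory GRing.Theory Num.Theory.
Local Open Scope ring_scope.

Section Defs.
Variable R : fieldType.

Definition qint (q : R) (m : nat) : R := \sum_(i < m) q ^+ i.
Definition qfact (q : R) (m : nat) : R := \prod_(i < m) qint q i.+1.
Definition qbinom (q : R) (m j : nat) : R :=
  qfact q m / (qfact q j * qfact q (m - j)).

(* The polynomials T_n(x,s,q), evaluated at x, s, q *)
Fixpoint T (x s q : R) (n : nat) {struct n} : R :=
  match n with
  | 0 => 1
  | 1 => x
  | (m.+1 as n1).+1 => (1 + q ^+ n1) * x * T x s q n1 + q ^+ n1 * s * T x s q m
  end.

Definition fps := nat -> R.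
Definition fps_mul (f g : fps) : fps :=
  fun n => \sum_(i < n.+1) f i * g (n - i)%N.

Definition qexp_ser (q : R) : fps := fun n => 1 / qfact q n.
Definition qexpN_ser (q : R) : fps := fun n => (-1) ^+ n / qfact q n.

(* the series  sum_m (-1)^m t_{2m+1} z^{2m+1} / [2m+1]!  (t indexed by 2m+1) *)
Definition qtan_ser (q : R) (t : nat -> R) : fps :=
  fun n => if odd n then (-1) ^+ n./2 * t n / qfact q n else 0.

(* t_{2m+1}(q) are the q-tangent numbers:
   (e(z)-e(-z))/(e(z)+e(-z)) = qtan_ser q t  as formal power series,
   i.e. (since e(z)+e(-z) has invertible constant term 2)
   e(z)-e(-z) = (e(z)+e(-z)) * qtan_ser q t. *)
Definition is_qtangent (q : R) (t : nat -> R) : Prop :=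
  forall n, qexp_ser q n - qexpN_ser q n
            = fps_mul (fun k => qexp_ser q k + qexpN_ser q k) (qtan_ser q t) n.
End Defs.

From HB Require Import structures.
From mathcomp Require Import all_boot all_order all_algebra.
From mathcomp Require Import reals.
From mathcomp Require Import zify ring.
From mathcomp Require Import boolp.
Import Order.TTheory GRing.Theory Num.Theory.
Set Implicit Arguments. Unset Strict Implicit. Unset Printing Implicit Defensive.
Local Open Scope ring_scope.

(* Let f(z) = sum_n T_n z^n / [n]!.  The recurrence of T_n is a second-order
   q-difference equation for f, from which u(z) = f(z) e(-xz) satisfies
   D_q^2 u(z) = x^2 u(z) + q s u(qz); since moreover u_1 = 0, u is even.
   Write f = f0 + f1 and e(xz) = c0 + c1 for the even and odd parts: evenness of
   f(z) e(-xz) means f1 c0 = f0 c1.  By definition of the q-tangent numbers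
   c1 = c0 tan_q(xz), hence f1 = f0 tan_q(xz), and the coefficient of z^(2n+1)
   of this identity is the theorem. *)

Section QIntegers.
Variables (R : fieldType) (q : R).

Lemma qint0 : qint q 0 = 0.
Proof. by rewrite /qint big_ord0. Qed.

Lemma qintS n : qint q n.+1 = qint q n + q ^+ n.
Proof. by rewrite /qint big_ord_recr. Qed.

Lemma qintD m n : qint q (m + n) = qint q m + q ^+ m * qint q n.
Proof.
elim: n => [|n IHn]; first by rewrite addn0 qint0 mulr0 addr0.
by rewrite addnS !qintS IHn exprD mulrDr addrA.
Qed.

Lemma subr1_mul_qint n : (q - 1) * qint q n = q ^+ n - 1.
Proof.
elim: n => [|n IHn]; first by rewrite qint0 mulr0 expr0 subrr.
by rewrite qintS mulrDr IHn exprS; ring.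
Qed.

Lemma qfact0 : qfact q 0 = 1.
Proof. by rewrite /qfact big_ord0. Qed.

Lemma qfactS n : qfact q n.+1 = qfact q n * qint q n.+1.
Proof. by rewrite /qfact big_ord_recr. Qed.

Lemma qfact_neq0 : (forall n, qint q n.+1 != 0) -> forall n, qfact q n != 0.
Proof.
by move=> qintS_neq0; elim=> [|n IHn]; rewrite ?qfact0 ?oner_neq0 // qfactS mulf_neq0.
Qed.

End QIntegers.

Lemma real_qintS_neq0 (R : realFieldType) (q : R) n : q != -1 -> qint q n.+1 != 0.
Proof.
move=> q_neqN1; have [q_ge0|q_lt0] := leP 0 q.
  suff : 1 <= qint q n.+1 by apply: contraTneq => ->; rewrite ler10.
  elim: n => [|n IHn]; first by rewrite qintS qint0 add0r expr0.
  by rewrite qintS (le_trans IHn) // lerDl exprn_ge0.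
apply: contra q_neqN1 => /eqP qint_eq0.
have := subr1_mul_qint q n.+1; rewrite qint_eq0 mulr0 => /esym/eqP; rewrite subr_eq0.
move/eqP/(congr1 Num.norm); rewrite normrX normr1 => /eqP; rewrite pexpr_eq1 // ltr0_norm //.
by rewrite -eqr_oppLR.
Qed.

Lemma sum_ord_pairs (R : nmodType) (F : nat -> R) n :
  \sum_(i < (2 * n).+2) F i = \sum_(k < n.+1) (F (2 * k)%N + F (2 * k).+1).
Proof.
elim: n => [|n IHn]; first by rewrite !big_ord_recr !big_ord0 /= !add0r.
have double_S : (2 * n.+1 = (2 * n).+2)%N by rewrite mulnS.
rewrite big_ord_recr /= big_ord_recr /= -addrA.
by rewrite double_S IHn [in RHS]big_ord_recr /= double_S.
Qed.

Section PowerSeries.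
Variable R : fieldType.
Implicit Types (a : R) (f g h : fps R).

(* [fps_dil a f] is f(az) and [fps_shift f] is z f(z). *)
Definition fps_dil a f : fps R := fun n => a ^+ n * f n.
Definition fps_shift f : fps R := fun n => if n is m.+1 then f m else 0.
Definition fps_even f : fps R := fun n => if odd n then 0 else f n.
Definition fps_odd f : fps R := fun n => if odd n then f n else 0.

(* Up to degree n, [fps_mul] is the product of truncations to polynomials,
   which transports the ring laws of {poly R}. *)
Lemma fps_mul_polyE f g (P Q : {poly R}) n :
  (forall i, (i <= n)%N -> P`_i = f i) -> (forall i, (i <= n)%N -> Q`_i = g i) ->
  fps_mul f g n = (P * Q)`_n.
Proof.
move=> Pf Qg; rewrite coefM; apply: eq_bigr => i _.
by rewrite Pf ?Qg ?leq_subr // -ltnS.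
Qed.

Lemma fps_mul_coefE f g n i : (i <= n)%N ->
  fps_mul f g i = (\poly_(j < n.+1) f j * \poly_(j < n.+1) g j)`_i.
Proof.
by move=> le_in; apply: fps_mul_polyE => j le_ji; rewrite coef_poly ltnS (leq_trans le_ji).
Qed.

Lemma fps_mulC f g : fps_mul f g = fps_mul g f.
Proof.
by apply: funext => n; rewrite !(fps_mul_coefE _ _ (leqnn n)) mulrC.
Qed.

Lemma fps_mulA f g h : fps_mul (fps_mul f g) h = fps_mul f (fps_mul g h).
Proof.
apply: funext => n.
pose P u := \poly_(j < n.+1) u j : {poly R}.
have -> : fps_mul (fps_mul f g) h n = (P f * P g * P h)`_n.
  apply: fps_mul_polyE => i le_in; first by rewrite -fps_mul_coefE.
  by rewrite coef_poly ltnS le_in.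
have -> : fps_mul f (fps_mul g h) n = (P f * (P g * P h))`_n.
  apply: fps_mul_polyE => i le_in; last by rewrite -fps_mul_coefE.
  by rewrite coef_poly ltnS le_in.
by rewrite mulrA.
Qed.

Lemma fps_mulDl f g h :
  fps_mul (fun k => f k + g k) h = (fun n => fps_mul f h n + fps_mul g h n).
Proof.
apply: funext => n.
by rewrite /fps_mul -big_split; apply: eq_bigr => i _; rewrite mulrDl.
Qed.

Lemma fps_mulDr f g h :
  fps_mul f (fun k => g k + h k) = (fun n => fps_mul f g n + fps_mul f h n).
Proof. by rewrite !(fps_mulC f) fps_mulDl. Qed.

Lemma fps_mulZl a f g : fps_mul (fun k => a * f k) g = (fun n => a * fps_mul f g n).
Proof.
apply: funext => n.
by rewrite /fps_mul mulr_sumr; apply: eq_bigr => i _; rewrite mulrA.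
Qed.

Lemma fps_mulZr a f g : fps_mul f (fun k => a * g k) = (fun n => a * fps_mul f g n).
Proof. by rewrite !(fps_mulC f) fps_mulZl. Qed.

Lemma fps_mul_shiftl f g : fps_mul (fps_shift f) g = fps_shift (fps_mul f g).
Proof.
apply: funext => -[|n]; rewrite /fps_mul big_ord_recl /= mul0r.
  by rewrite big_ord0 addr0.
by rewrite add0r; apply: eq_bigr => i _; rewrite subSS.
Qed.

Lemma fps_mul_shiftr f g : fps_mul f (fps_shift g) = fps_shift (fps_mul f g).
Proof. by rewrite !(fps_mulC f) fps_mul_shiftl. Qed.

Lemma fps_mul_cancelr f1 f2 g :
  g 0%N != 0 -> fps_mul f1 g = fps_mul f2 g -> f1 = f2.
Proof.
move=> g0_neq0 eq_fg; apply: funext => n.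
elim/ltn_ind: n => n IHn; have := congr1 (fun u => u n) eq_fg.
rewrite /fps_mul !big_ord_recr /= subnn.
rewrite (eq_bigr (fun i : 'I_n => f2 i * g (n - i)%N)) => [|i _]; last by rewrite IHn.
by move/addrI/eqP; rewrite -subr_eq0 -mulrBl mulf_eq0 (negPf g0_neq0) orbF subr_eq0 => /eqP.
Qed.

Lemma fps_dil_mul a f g : fps_dil a (fps_mul f g) = fps_mul (fps_dil a f) (fps_dil a g).
Proof.
apply: funext => n.
rewrite /fps_dil /fps_mul mulr_sumr; apply: eq_bigr => i _.
have le_in : (i <= n)%N by rewrite -ltnS.
by rewrite -{1}(subnKC le_in) exprD; ring.
Qed.

Lemma fps_dil_dil a b f : fps_dil a (fps_dil b f) = fps_dil (a * b) f.
Proof. by apply: funext => n; rewrite /fps_dil exprMn mulrA. Qed.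

Lemma fps_odd_dil a f : fps_odd (fps_dil a f) = fps_dil a (fps_odd f).
Proof.
by apply: funext => n; rewrite /fps_odd /fps_dil; case: odd; rewrite ?mulr0.
Qed.

Lemma fps_even_dil a f : fps_even (fps_dil a f) = fps_dil a (fps_even f).
Proof.
by apply: funext => n; rewrite /fps_even /fps_dil; case: odd; rewrite ?mulr0.
Qed.

Lemma fps_odd_mul_dilN1 f g n :
  fps_odd (fps_mul f (fps_dil (-1) g)) n
  = fps_mul (fps_odd f) (fps_even g) n - fps_mul (fps_even f) (fps_odd g) n.
Proof.
rewrite /fps_odd /fps_mul -sumrB; case: ifP => odd_n.
  apply: eq_bigr => i _; have le_in : (i <= n)%N by rewrite -ltnS.
  rewrite /fps_dil /fps_even -signr_odd oddB // odd_n.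
  by case: (odd i); rewrite /= ?expr0 ?expr1; ring.
rewrite big1 // => i _; have le_in : (i <= n)%N by rewrite -ltnS.
rewrite /fps_even oddB // odd_n.
by case: (odd i); rewrite /= ?mulr0 ?mul0r subrr.
Qed.

Lemma fps_mul_even_coef_odd f g n :
  fps_mul (fps_even f) g (2 * n).+1
  = \sum_(k < n.+1) f (2 * k)%N * g ((2 * n).+1 - 2 * k)%N.
Proof.
rewrite /fps_mul (sum_ord_pairs (fun i => fps_even f i * g ((2 * n).+1 - i)%N)).
by apply: eq_bigr => k _; rewrite /fps_even /= oddM mul0r addr0.
Qed.

End PowerSeries.

Section QDerivative.
Variables (R : fieldType) (q : R).
Implicit Types (f g u : fps R).

(* The q-derivative (f(qz) - f(z)) / ((q - 1) z). *)
Definition qderiv f : fps R := fun n => qint q n.+1 * f n.+1.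

Lemma qderiv_mul f g :
  qderiv (fps_mul f g)
  = (fun n => fps_mul (qderiv f) g n + fps_mul (fps_dil q f) (qderiv g) n).
Proof.
apply: funext => n.
rewrite /qderiv /fps_mul mulr_sumr.
have -> : \sum_(i < n.+2) qint q n.+1 * (f i * g (n.+1 - i)%N) =
   \sum_(i < n.+2) qint q i * f i * g (n.+1 - i)%N +
   \sum_(i < n.+2) q ^+ i * f i * (qint q (n.+1 - i) * g (n.+1 - i)%N).
  rewrite -big_split; apply: eq_bigr => i _.
  have le_in : (i <= n.+1)%N by rewrite -ltnS.
  by rewrite -{1}(subnKC le_in) qintD /=; ring.
congr (_ + _).
  rewrite big_ord_recl /= qint0 !mul0r add0r; apply: eq_bigr => i _.
  by rewrite /bump /= add1n subSS.
rewrite big_ord_recr /= subnn qint0 mul0r mulr0 addr0; apply: eq_bigr => i _.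
by rewrite /fps_dil subSn // -ltnS.
Qed.

Lemma qderiv2_odd_eq0 u (b : nat -> R) :
  (forall n, qint q n.+1 != 0) ->
  (forall n, qderiv (qderiv u) n = b n * u n) -> u 1%N = 0 ->
  forall m, u (2 * m).+1 = 0.
Proof.
move=> qintS_neq0 ode u1 m; elim: m => [|m IHm]; first by rewrite muln0.
have := ode (2 * m).+1; rewrite IHm mulr0 /qderiv mulnS.
by move/eqP; rewrite !mulf_eq0 !(negPf (qintS_neq0 _)) => /eqP.
Qed.

End QDerivative.

Section QExponential.
Variables (R : fieldType) (q c : R).
Hypothesis qintS_neq0 : forall n, qint q n.+1 != 0.
Implicit Types (f : fps R).

Local Notation e := (fps_dil c (qexp_ser q)).

Lemma qderiv_qexp_dil : qderiv q e = (fun n => c * e n).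
Proof.
apply: funext => n.
rewrite /qderiv /fps_dil /qexp_ser qfactS exprS; field.
by rewrite qfact_neq0 ?qintS_neq0.
Qed.

Lemma qdil_qexp_dil : fps_dil q e = (fun n => e n + (q - 1) * c * fps_shift e n).
Proof.
apply: funext => -[|n]; first by rewrite /fps_dil !expr0 mul1r mulr0 addr0.
rewrite /fps_dil /fps_shift /qexp_ser qfactS.
have -> : q ^+ n.+1 = (q - 1) * qint q n.+1 + 1 by rewrite subr1_mul_qint subrK.
by rewrite exprS; field; rewrite qfact_neq0 ?qintS_neq0.
Qed.

Lemma qderiv_mul_qexp_dil f :
  qderiv q (fps_mul f e) = fps_mul (fun n => qderiv q f n + c * fps_dil q f n) e.
Proof. by rewrite qderiv_mul qderiv_qexp_dil fps_mulZr fps_mulDl fps_mulZl. Qed.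

Lemma qdil_mul_qexp_dil f :
  fps_dil q (fps_mul f e)
  = fps_mul (fun n => fps_dil q f n + (q - 1) * c * fps_shift (fps_dil q f) n) e.
Proof.
by rewrite fps_dil_mul qdil_qexp_dil fps_mulDr fps_mulZr fps_mul_shiftr
  fps_mulDl fps_mulZl fps_mul_shiftl.
Qed.

End QExponential.

Lemma qexp_odd_qtan (R : fieldType) (q : R) (t : nat -> R) :
  (2 : R) != 0 -> is_qtangent q t ->
  fps_odd (qexp_ser q) = fps_mul (fps_even (qexp_ser q)) (qtan_ser q t).
Proof.
move=> two_neq0 qtan_t; apply: funext => n; apply: (mulfI two_neq0).
have qexp_evenE :
    (fun k => qexp_ser q k + qexpN_ser q k) = (fun k => 2 * fps_even (qexp_ser q) k).
  apply: funext => k.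
  by rewrite /qexpN_ser /fps_even /qexp_ser -signr_odd; case: odd; rewrite ?expr0 ?expr1; ring.
have := qtan_t n; rewrite qexp_evenE fps_mulZl => <-.
rewrite /qexpN_ser /fps_odd /qexp_ser -signr_odd.
by case: odd; rewrite ?expr0 ?expr1; ring.
Qed.

Section TGeneratingSeries.
Variables (R : fieldType) (x s q : R).
Hypothesis qintS_neq0 : forall n, qint q n.+1 != 0.

Definition Tser : fps R := fun n => T x s q n / qfact q n.

Lemma T_rec n :
  T x s q n.+2 = (1 + q ^+ n.+1) * x * T x s q n.+1 + q ^+ n.+1 * s * T x s q n.
Proof. by []. Qed.

(* [L g] is defined so that D_q (g(z) e(-xz)) = (L g)(z) e(-xz); this is the
   recurrence of T in the form needed for u(z) = Tser(z) e(-xz). *)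
Local Notation L g := (fun n => qderiv q g n + - x * fps_dil q g n).

Lemma Tser_qdiff :
  L (L Tser) = (fun n => x ^+ 2 * Tser n
     + q * s * (fps_dil q Tser n + (q - 1) * - x * fps_shift (fps_dil q Tser) n)).
Proof.
have qfact_neq0 := qfact_neq0 qintS_neq0.
apply: funext => -[|n]; rewrite /qderiv /fps_dil /fps_shift /Tser.
  rewrite !T_rec /= !qfactS qfact0 !expr0 !expr1; field.
  by rewrite oner_neq0 !qintS_neq0.
(* [field] cannot use (q - 1)[n+1] = q^(n+1) - 1, so it is substituted first. *)
have -> : (q - 1) * - x * (q ^+ n * (T x s q n / qfact q n))
        = - x * (q ^+ n.+1 - 1) * q ^+ n * T x s q n / qfact q n.+1.
  by rewrite -subr1_mul_qint qfactS; field; rewrite qfact_neq0 qintS_neq0.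
by rewrite !T_rec !qfactS !exprS; field; rewrite qfact_neq0 !qintS_neq0.
Qed.

Lemma Tser_mul_qexp_odd_eq0 m :
  fps_mul Tser (fps_dil (- x) (qexp_ser q)) (2 * m).+1 = 0.
Proof.
apply: (qderiv2_odd_eq0 (b := fun n => x ^+ 2 + q * s * q ^+ n)) => // [n|].
  rewrite !qderiv_mul_qexp_dil // Tser_qdiff fps_mulDl !fps_mulZl.
  by rewrite -qdil_mul_qexp_dil // /fps_dil mulrDl mulrA.
rewrite /fps_mul !big_ord_recr big_ord0 /= /Tser /fps_dil /qexp_ser qfactS qfact0.
by rewrite /= expr1 expr0; field; rewrite oner_neq0 qintS_neq0.
Qed.

Lemma Tser_odd_qtan (t : nat -> R) :
  (2 : R) != 0 -> is_qtangent q t ->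
  fps_odd Tser = fps_mul (fps_even Tser) (fps_dil x (qtan_ser q t)).
Proof.
move=> two_neq0 qtan_t; set C := fps_dil x (qexp_ser q).
have C_odd : fps_odd C = fps_mul (fps_even C) (fps_dil x (qtan_ser q t)).
  by rewrite fps_odd_dil (qexp_odd_qtan two_neq0 qtan_t) fps_dil_mul fps_even_dil.
have Tser_C_parity :
    fps_mul (fps_odd Tser) (fps_even C) = fps_mul (fps_even Tser) (fps_odd C).
  apply: funext => n; apply/eqP; rewrite -subr_eq0 -fps_odd_mul_dilN1.
  rewrite fps_dil_dil mulN1r /fps_odd; case: ifP => // odd_n.
  by rewrite -(odd_double_half n) odd_n add1n -mul2n Tser_mul_qexp_odd_eq0.
apply: (@fps_mul_cancelr _ _ _ (fps_even C)).
  by rewrite /fps_even /C /fps_dil /qexp_ser /= expr0 qfact0 divr1 mulr1 oner_neq0.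
by rewrite Tser_C_parity C_odd fps_mulA (fps_mulC (fps_dil _ _)).
Qed.

End TGeneratingSeries.

Theorem theorem3p1 (R : realType) (q : R) (hq : q != -1) (t : nat -> R)
    (ht : is_qtangent q t) (x s : R) (n : nat) :
  T x s q (2 * n).+1 =
  \sum_(k < n.+1)
     qbinom q (2 * n).+1 (2 * k) * (-1) ^+ (n - k)
     * t (2 * n - 2 * k).+1 * x ^+ ((2 * n).+1 - 2 * k) * T x s q (2 * k).
Proof.
have qintS_neq0 m : qint q m.+1 != 0 by exact: real_qintS_neq0.
have qfact_neq0 := qfact_neq0 qintS_neq0.
have two_neq0 : (2 : R) != 0 by rewrite pnatr_eq0.
have := congr1 (fun f => f (2 * n).+1) (Tser_odd_qtan x s qintS_neq0 two_neq0 ht).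
rewrite /= fps_mul_even_coef_odd /fps_odd /= oddM /= /Tser => coefE.
rewrite -[LHS](divfK (qfact_neq0 (2 * n).+1)) coefE mulr_suml.
apply: eq_bigr => k _; have le_kn : (k <= n)%N by rewrite -ltnS.
rewrite /qbinom /fps_dil /qtan_ser.
have -> : ((2 * n).+1 - 2 * k = (2 * (n - k)).+1)%N by lia.
have -> : (2 * n - 2 * k = 2 * (n - k))%N by lia.
rewrite /= oddM /= [in uphalf _]mul2n uphalf_double.
by field; rewrite !qfact_neq0.
Qed.
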